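(* Let $G$ be a simple undirected graph on $n$ vertices, and let $\delta$ be the minimum vertex degree over all graphs in the LC orbit of $G$. Then $$Q(G,4)\le \frac{\gamma(\delta+1)+6^n}{2^n},\qquad\text{where}\qquad \gamma(d)=\sum_{t=0}^{n}\binom{n}{t}2^{t}\left(\sum_{k=\max(1,\,d+t-n)}^{t}\binom{t}{k}2^{\,n-k}\right).$$
   Context: All graphs are finite, simple and undirected. For a vertex $u$, $G\setminus u$ denotes $G$ with $u$ and all its incident edges removed. For a vertex $v$ with neighbourhood $N_v$ (the set of vertices adjacent to $v$), local complementation (LC) on $v$ transforms $G$ into $G*v$ by replacing the induced subgraph of $G$ on $N_v$ by its complement. For an edge $\{u,v\}$, edge local complementation is $G^{(uv)}=G*u*v*u$. The LC orbit of $G$ is the set of all graphs (up to isomorphism) obtainable from $G$ by any finite sequence of LC operations. The interlace polynomial $Q(G)=Q(G,x)$ is defined recursively: for the edgeless graph $E_n$ on $n$ vertices, $Q(E_n)=x^n$; for any other graph $G$, choose any edge $\{u,v\}$ and set $Q(G)=Q(G\setminus u)+Q(G^{(uv)}\setminus u)+Q((G*u)\setminus u)$ (this is independent of the choice of edge). *)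

From HB Require Import structures.
From mathcomp Require Import all_boot all_order all_algebra.
Set Implicit Arguments. Unset Strict Implicit. Unset Printing Implicit Defensive.
Import Order.TTheory GRing.Theory Num.Theory.

Definition simple_graph n (e : rel 'I_n) : bool :=
  [forall x, ~~ e x x] && [forall x, forall y, e x y == e y x].

Definition nbhd n (e : rel 'I_n) (v : 'I_n) : {set 'I_n} := [set x | e v x].
Definition deg n (e : rel 'I_n) (v : 'I_n) : nat := #|nbhd e v|.

Definition lc n (e : rel 'I_n) (v : 'I_n) : rel 'I_n :=
  fun x y => e x y (+) [&& x != y, x \in nbhd e v & y \in nbhd e v].

Definition elc n (e : rel 'I_n) (u v : 'I_n) : rel 'I_n :=
  lc (lc (lc e u) v) u.

(* LC orbit: graphs obtainable by a finite sequence of LC operations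
   (on the same labelled vertex set; isomorphism does not affect degrees). *)
Definition LC_orbit n (e h : rel 'I_n) : Prop :=
  exists s : seq 'I_n, h = foldl (@lc n) e s.

(* Interlace polynomial of the induced subgraph of e on the vertex set S.
   Removing a vertex u is modelled as S :\ u; since for v in S the induced
   subgraph of (e * v) on S equals (induced subgraph on S) * v, LC can be
   computed on the ambient relation.  An edge {u,v} inside S is chosen by
   [pick]; the recursion is independent of this choice.  The fuel k = #|S|
   suffices, since each recursive call removes one vertex. *)
Fixpoint Qaux n (k : nat) (e : rel 'I_n) (S : {set 'I_n}) : {poly int} :=
  match k with
  | 0 => 'X^#|S|
  | k'.+1 =>
    match [pick uv : 'I_n * 'I_n | [&& uv.1 \in S, uv.2 \in S & e uv.1 uv.2]] with
    | None => 'X^#|S|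
    | Some uv =>
        let u := uv.1 in let v := uv.2 in
        (Qaux k' e (S :\ u) + Qaux k' (elc e u v) (S :\ u)
         + Qaux k' (lc e u) (S :\ u))%R
    end
  end.

Definition interlace n (e : rel 'I_n) : {poly int} := Qaux n e [set: 'I_n].

Definition gamma (n d : nat) : nat :=
  \sum_(t < n.+1) 'C(n, t) * 2 ^ t *
     \sum_(maxn 1 (d + t - n) <= k < t.+1) 'C(t, k) * 2 ^ (n - k).

From HB Require Import structures.
From mathcomp Require Import all_boot all_order all_algebra.
From mathcomp Require Import ring zify.
Set Implicit Arguments. Unset Strict Implicit. Unset Printing Implicit Defensive.
Import GRing.Theory Num.Theory.

(* For a vertex set S and weights f v x z, let
        state_sum e S f = sum_{X <= S} prod_{v in S} f v [v in X] (parity e v X),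
      where parity e v X says that v has an odd number of neighbours in X.
      Local complementation at w is matched by the involution lc_shift of the
      subsets X (toggle w in X when w is odd in X), and deleting a vertex u
      pins its weight to [u \notin X].  For the weight w4 x z = (x || z ? 1 : 3)
      this turns the interlace recurrence into an identity, so
      Q(G,4) = sum_X 3 ^ #|~: support G X|, support G X = X u {odd vertices}.
   2. Distance.  #|support H X| is invariant under LC (with X moved by
      lc_shift); by induction on #|X|, every nonempty X has support of size
      > delta, the minimum degree of the LC orbit.
   3. Counting.  Hence #|~: support G X| <= min (n - #|X|) (n - delta - 1)
      for X nonempty, while X = set0 contributes 3 ^ n; grouping the sets by
      size and comparing with gamma through C(n,t) C(t,k) = C(n,k) C(n-k,t-k)
      and 3 ^ m = sum_j C(m,j) 2 ^ j gives the bound. *)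

Section Parity.
Variable n : nat.
Implicit Types (e : rel 'I_n) (X Y S : {set 'I_n}).

Definition parity e v X : bool := \big[addb/false]_(y in X) e v y.

Definition sym_irrefl e := (forall x, e x x = false) /\ (forall x y, e x y = e y x).

(* The involution on vertex subsets accompanying local complementation at w. *)
Definition lc_shift e w X :=
  if parity e w X then (if w \in X then X :\ w else w |: X) else X.

Lemma parity_setU1 e v w X : w \notin X -> parity e v (w |: X) = e v w (+) parity e v X.
Proof. by move=> wX; rewrite /parity big_setU1. Qed.

Lemma parity_setD1 e v w X : w \in X -> parity e v X = e v w (+) parity e v (X :\ w).
Proof. by move=> wX; rewrite /parity (big_setD1 _ wX). Qed.

Lemma parity_neighbour e w X : parity e w X -> exists2 y, y \in X & e w y.
Proof.
rewrite /parity; case: (pickP [pred y | (y \in X) && e w y]) => [y /andP [] | none].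
  by exists y.
by rewrite big1 // => y yX; have := none y; rewrite /= yX.
Qed.

Lemma parity_lc_shift e v w X :
  parity e v (lc_shift e w X) = parity e v X (+) (e v w && parity e w X).
Proof.
rewrite /lc_shift; case: (parity e w X); last by rewrite andbF addbF.
rewrite andbT; case: ifP => wX; last by rewrite parity_setU1 ?wX // addbC.
by rewrite (parity_setD1 e v wX); case: (e v w); case: (parity e v (X :\ w)).
Qed.

Lemma in_lc_shift e w X v :
  (v \in lc_shift e w X) = if v == w then (v \in X) (+) parity e w X else v \in X.
Proof.
rewrite /lc_shift; case: (parity e w X); last by case: eqP; rewrite ?addbF.
case: (boolP (w \in X)) => wX; case: eqVneq => [->|vw]; rewrite !inE ?eqxx.
- by rewrite wX.
- by rewrite vw.
- by rewrite (negbTE wX).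
- by rewrite (negbTE vw).
Qed.

Lemma lc_shiftK e w : e w w = false -> involutive (lc_shift e w).
Proof.
move=> eww X; rewrite {1}/lc_shift parity_lc_shift eww addbF /lc_shift.
case: (parity e w X) => //; case: (boolP (w \in X)) => wX.
  by rewrite setD11 setD1K.
by rewrite setU11 setU1K.
Qed.

Lemma lc_shift_sub e w X S : w \in S -> (lc_shift e w X \subset S) = (X \subset S).
Proof.
move=> wS; rewrite /lc_shift; case: (parity e w X) => //; case: ifP => wX.
  by rewrite -{2}(setD1K wX) subUset sub1set wS; apply/idP/idP => // /subset_trans->.
by rewrite subUset sub1set wS.
Qed.

Lemma parity_lc e w v Y :
  parity (lc e w) v Y = parity e v Y (+) (e w v && (parity e w Y (+) (v \in Y))).
Proof.
rewrite /parity /lc big_split /=; congr addb; rewrite /nbhd.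
case: (boolP (e w v)) => ewv /=; last first.
  by rewrite big1 // => y _; rewrite !inE (negbTE ewv) andbF.
case: (boolP (v \in Y)) => vY.
  rewrite (big_setD1 v vY) [X in _ = X (+) _](big_setD1 v vY) eqxx /= addbT.
  rewrite inE ewv /= negbK; apply: eq_bigr => y; rewrite !inE => /andP [yv _].
  by rewrite eq_sym yv.
rewrite addbF; apply: eq_bigr => y yY; rewrite !inE ewv /=.
by case: eqP yY vY => // -> ->.
Qed.

Lemma sym_irrefl_lc e w : sym_irrefl e -> sym_irrefl (lc e w).
Proof.
move=> [irr sym]; split=> [x|x y]; first by rewrite /lc irr eqxx.
rewrite /lc (sym x y) (eq_sym x y); congr addb.
by case: (x \in _); case: (y \in _); rewrite ?andbF.
Qed.

End Parity.

Section StateSum.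
Variable n : nat.
Implicit Types (e : rel 'I_n) (X Y S : {set 'I_n}) (f : 'I_n -> bool -> bool -> nat).

Definition state_sum e S f : nat :=
  \sum_(X : {set 'I_n} | X \subset S) \prod_(v in S) f v (v \in X) (parity e v X).

Definition upd f u (h : bool -> bool -> nat) : 'I_n -> bool -> bool -> nat :=
  fun v => if v == u then h else f v.

Lemma sum_subsets_split (F : {set 'I_n} -> nat) S u : u \in S ->
  \sum_(X : {set 'I_n} | X \subset S) F X
  = \sum_(Y : {set 'I_n} | Y \subset S :\ u) (F Y + F (u |: Y)).
Proof.
move=> uS; rewrite big_split /= (bigID (fun X => u \in X)) /= addnC.
congr (_ + _); first by apply: eq_bigl => X; rewrite subsetD1.
rewrite (reindex_onto (fun Y => u |: Y) (fun X => X :\ u)); last first.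
  by move=> X /andP [_ uX]; rewrite setD1K.
apply: eq_bigl => Y; rewrite subsetD1 setU11 andbT subUset sub1set uS /=.
case: (boolP (u \in Y)) => uY /=; last by rewrite setU1K // eqxx andbT.
by rewrite andbF; apply/negbTE/nandP; right; apply: contraTneq uY => <-; rewrite setD11.
Qed.

Lemma state_sum_ext e S f g : (forall v x z, f v x z = g v x z) ->
  state_sum e S f = state_sum e S g.
Proof. by move=> fg; apply: eq_bigr => X _; apply: eq_bigr => v _; rewrite fg. Qed.

Lemma state_sum_del e S f u : u \in S ->
  state_sum e (S :\ u) f = state_sum e S (upd f u (fun x _ => ~~ x : nat)).
Proof.
move=> uS; rewrite /state_sum (sum_subsets_split _ uS); apply: eq_bigr => Y.
rewrite subsetD1 => /andP [_ uY].
rewrite (big_setD1 u uS) [X in _ = _ + X](big_setD1 u uS) /upd !eqxx setU11 /=.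
rewrite (negbTE uY) mul0n addn0 mul1n.
by apply: eq_bigr => v; rewrite !inE => /andP [/negbTE -> _].
Qed.

(* local complementation at w, transported along the involution lc_shift *)
Lemma state_sum_lc e S f w : sym_irrefl e -> w \in S ->
  state_sum (lc e w) S f
  = state_sum e S (fun v x z => if v == w then f v (x (+) z) z
                                else if e w v then f v x (z (+) x) else f v x z).
Proof.
move=> [irr sym] wS; have shiftK := lc_shiftK (irr w).
rewrite /state_sum (reindex_inj (can_inj shiftK)).
apply: eq_big => [X | X _]; first by rewrite lc_shift_sub.
apply: eq_bigr => v _; rewrite parity_lc !parity_lc_shift !in_lc_shift.
case: (eqVneq v w) => [->|vw]; first by rewrite irr /= !addbF.
rewrite (sym v w) (irr w) /=; case: (e w v) => /=; last by rewrite !addbF.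
by case: (parity e v X); case: (parity e w X); case: (v \in X).
Qed.

Lemma state_sum_add e S f u a b : u \in S ->
  state_sum e S (upd f u a) + state_sum e S (upd f u b)
  = state_sum e S (upd f u (fun x z => a x z + b x z)).
Proof.
move=> uS; rewrite /state_sum -big_split /=; apply: eq_bigr => X _.
have others h : \prod_(v in S :\ u) upd f u h v (v \in X) (parity e v X)
    = \prod_(v in S :\ u) f v (v \in X) (parity e v X).
  by apply: eq_bigr => v; rewrite !inE /upd => /andP [/negbTE -> _].
by rewrite !(big_setD1 u uS) !others /upd !eqxx -mulnDl.
Qed.

Lemma state_sum_set0 e f : state_sum e set0 f = 1.
Proof. by rewrite /state_sum (big_pred1 set0) ?big_set0 // => X; rewrite /= subset0. Qed.

End StateSum.

Definition w4 (x z : bool) : nat := if x || z then 1 else 3.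

Section InterlaceAt4.
Variable n : nat.
Implicit Types (e : rel 'I_n) (S : {set 'I_n}).

Definition F4 : 'I_n -> bool -> bool -> nat := fun _ => w4.

(* w4 is unchanged by the substitutions of state_sum_lc *)
Lemma state_sum_lc_upd e S w u h : sym_irrefl e -> w \in S ->
  state_sum (lc e w) S (upd F4 u h) =
  state_sum e S (upd F4 u (if u == w then (fun x z => h (x (+) z) z)
                           else if e w u then (fun x z => h x (z (+) x)) else h)).
Proof.
move=> se wS; rewrite state_sum_lc //; apply: state_sum_ext => v x z; rewrite /upd /F4.
case: (eqVneq v u) => [->|_]; first by case: (u == w); case: (e w u).
by case: (v == w); case: (e w v); case: x; case: z.
Qed.

Lemma state_sum_rec e S u v : sym_irrefl e -> u \in S -> v \in S -> e u v ->
  state_sum e S F4 = state_sum e (S :\ u) F4 + state_sum (elc e u v) (S :\ u) F4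
                     + state_sum (lc e u) (S :\ u) F4.
Proof.
move=> se uS vS euv.
have se_u := sym_irrefl_lc u se; have se_uv := sym_irrefl_lc v se_u.
have uv : u != v by apply: contraTneq euv => ->; rewrite (proj1 se).
have lc_vu : lc e u v u by rewrite /lc /nbhd !inE (proj1 se) !andbF addbF (proj2 se).
rewrite /elc !state_sum_del // state_sum_lc_upd // eqxx state_sum_lc_upd // (negbTE uv).
rewrite lc_vu state_sum_lc_upd // eqxx state_sum_lc_upd // eqxx !state_sum_add //.
by apply: state_sum_ext => w x z; rewrite /upd /F4; case: (w == u); case: x; case: z.
Qed.

(* without edges every vertex contributes 1 + 3 *)
Lemma state_sum_edgeless e S : (forall x y, x \in S -> y \in S -> e x y = false) ->
  state_sum e S F4 = 4 ^ #|S|.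
Proof.
move: {2}#|S| (erefl #|S|) => k; elim: k S => [|k IH] S card_S no_edge.
  by move/eqP: card_S; rewrite cards_eq0 => /eqP ->; rewrite state_sum_set0 cards0.
have [u uS] : exists u, u \in S by apply/set0Pn; rewrite -cards_eq0 card_S.
have card_Su : #|S :\ u| = k by move: card_S; rewrite (cardsD1 u) uS => -[].
have even (Z : {set 'I_n}) v : Z \subset S -> v \in S -> parity e v Z = false.
  by move=> ZS vS; rewrite /parity big1 // => y /(subsetP ZS); apply: no_edge.
rewrite card_S expnS -card_Su -(IH (S :\ u)) //; last first.
  by move=> x y /setD1P [_ xS] /setD1P [_ yS]; apply: no_edge.
rewrite /state_sum (sum_subsets_split _ uS) big_distrr /=; apply: eq_bigr => Y.
rewrite subsetD1 => /andP [YS uY].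
rewrite !(big_setD1 u uS) setU11 (negbTE uY) !even // ?subUset ?sub1set ?uS //.
rewrite /F4 /w4 /=.
have -> : \prod_(v in S :\ u) (if (v \in u |: Y) || parity e v (u |: Y) then 1 else 3)
    = \prod_(v in S :\ u) (if (v \in Y) || parity e v Y then 1 else 3).
  apply: eq_bigr => v /setD1P [vu vS].
  by rewrite !inE (negbTE vu) parity_setU1 // no_edge.
by rewrite -mulnDl.
Qed.

Lemma Qaux_at4 k e S : sym_irrefl e -> #|S| <= k ->
  ((Qaux k e S).[4%:R] = (state_sum e S F4)%:R :> int)%R.
Proof.
elim: k e S => [|k IH] e S se card_S /=.
  rewrite hornerXn state_sum_edgeless ?natrX // => x y xS.
  by move: card_S; rewrite leqn0 cards_eq0 => /eqP S0; move: xS; rewrite S0 inE.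
case: pickP => [[u v] /= /and3P [uS vS euv] | no_edge].
  have card_Su : #|S :\ u| <= k by move: card_S; rewrite (cardsD1 u) uS.
  have se_u := sym_irrefl_lc u se.
  have se_elc : sym_irrefl (elc e u v) by rewrite /elc; do 2 apply: sym_irrefl_lc.
  rewrite !hornerD !IH //.
  by rewrite -!natrD -state_sum_rec.
rewrite hornerXn state_sum_edgeless ?natrX // => x y xS yS.
by have := no_edge (x, y); rewrite /= xS yS.
Qed.

End InterlaceAt4.

Section Support.
Variable n : nat.
Implicit Types (e G H : rel 'I_n) (X : {set 'I_n}).

Definition support e X : {set 'I_n} := [set v | (v \in X) || parity e v X].

Lemma state_sum_full e : state_sum e setT (@F4 n) = \sum_X 3 ^ #|~: support e X|.
Proof.
rewrite /state_sum; apply: eq_big => [X|X _]; first by rewrite subsetT.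
rewrite -prod_nat_const [RHS]big_mkcond [LHS]big_mkcond /=; apply: eq_bigr => v _.
by rewrite /F4 /w4 !inE; case: (v \in X); case: (parity e v X).
Qed.

Lemma support_lc e w X : sym_irrefl e -> support (lc e w) (lc_shift e w X) = support e X.
Proof.
move=> [irr sym]; apply/setP => v; rewrite !inE parity_lc !parity_lc_shift !in_lc_shift.
case: (eqVneq v w) => [->|vw].
  by rewrite irr /= !addbF; case: (w \in X); case: (parity e w X).
rewrite (sym v w) irr /=; case: (e w v) => /=; last by rewrite !addbF.
by case: (parity e v X); case: (parity e w X); case: (v \in X).
Qed.

(* a vertex of X all of whose neighbours are odd puts its closed neighbourhood
   into the support *)
Lemma deg_lt_support H X v : sym_irrefl H -> v \in X ->
  (forall y, H v y -> parity H y X) -> deg H v < #|support H X|.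
Proof.
move=> [irr _] vX odd_nb.
have -> : (deg H v).+1 = #|v |: nbhd H v| by rewrite cardsU1 /nbhd inE irr.
apply: subset_leq_card; apply/subsetP => x; rewrite !inE => /orP [/eqP ->|Hvx].
  by rewrite vX.
by rewrite odd_nb ?orbT.
Qed.

Lemma orbit_refl G : LC_orbit G G.
Proof. by exists [::]. Qed.

Lemma orbit_lc G H w : LC_orbit G H -> LC_orbit G (lc H w).
Proof. by case=> s ->; exists (rcons s w); rewrite foldl_rcons. Qed.

Lemma orbit_sym_irrefl G H : sym_irrefl G -> LC_orbit G H -> sym_irrefl H.
Proof. by move=> sG [s ->]; elim: s G sG => //= w s IH G sG; apply/IH/sym_irrefl_lc. Qed.

Lemma simple_sym_irrefl G : simple_graph G -> sym_irrefl G.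
Proof.
move=> /andP [/forallP irr /forallP sym]; split=> [x|x y]; first exact/negbTE.
by have /forallP/(_ y)/eqP := sym x.
Qed.

End Support.

(* choose a (k+j)-set and a k-subset of it = choose the k-set, then j more *)
Lemma bin_mul_shift n k j : k + j <= n ->
  'C(n, k + j) * 'C(k + j, k) = 'C(n, k) * 'C(n - k, j).
Proof.
move=> le_kjn.
have le_jnk : j <= n - k by rewrite leq_subRL // (leq_trans (leq_addr j k)).
have E1 := bin_fact le_kjn.
have E2 := bin_fact (leq_addr j k); rewrite addKn in E2.
have E3 := bin_fact (leq_trans (leq_addr j k) le_kjn).
have E4 := bin_fact le_jnk; rewrite -subnDA in E4.
have fact_pos : 0 < k`! * j`! * (n - (k + j))`! by rewrite !muln_gt0 !fact_gt0.
apply/eqP; rewrite -(eqn_pmul2r fact_pos); apply/eqP.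
transitivity n`!; first by rewrite -E1 -E2; ring.
by rewrite -E3 -E4; ring.
Qed.

Lemma leq_sum_subinterval (F : nat -> nat) k m n : k + m <= n ->
  \sum_(j < m.+1) F (k + j) <= \sum_(t < n.+1) F t.
Proof.
move=> le_kmn; rewrite -(big_mkord xpredT F) -(big_mkord xpredT (F \o addn k)).
have -> : \sum_(0 <= j < m.+1) (F \o addn k) j = \sum_(t <- iota k m.+1) F t.
  by rewrite -[in RHS](addn0 k) iotaDl big_map.
apply: (uniq_sub_le_big leqnn (fun x y => leq_addr y x)); rewrite ?iota_uniq // => t.
by rewrite !mem_iota; lia.
Qed.

Lemma sum_by_card n (F : nat -> nat) :
  \sum_(X : {set 'I_n}) F #|X| = \sum_(k < n.+1) 'C(n, k) * F k.
Proof.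
have card_lt (X : {set 'I_n}) : #|X| < n.+1 by rewrite ltnS -[n in _ <= n]card_ord max_card.
rewrite (partition_big (fun X : {set 'I_n} => (inord #|X| : 'I_n.+1)) xpredT) //=.
apply: eq_bigr => k _.
rewrite (eq_bigr (fun _ => F k)) => [|X /eqP <-]; last by rewrite inordK.
rewrite (eq_bigl [in [set X : {set 'I_n} | #|X| == k]]) => [|X].
  by rewrite sum_nat_const card_draws card_ord.
by rewrite inE -(inj_eq val_inj) /= inordK.
Qed.

Section Counting.
Variables n d : nat.
Hypothesis le_dn : d <= n.

Definition gamma_term (t k : nat) : nat :=
  if maxn 1 (d + t - n) <= k <= t then 'C(n, t) * 2 ^ t * ('C(t, k) * 2 ^ (n - k))
  else 0.

(* 3 ^ (the largest possible number of vertices outside the support of a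
   set of size k > 0, when all such supports have at least d elements) *)
Definition size_bound (k : nat) : nat :=
  if k == 0 then 0 else 3 ^ minn (n - k) (n - d).

Lemma size_bound0 : size_bound 0 = 0. Proof. by []. Qed.

Lemma gamma_exchange : gamma n d = \sum_(k < n.+1) \sum_(t < n.+1) gamma_term t k.
Proof.
rewrite exchange_big; apply: eq_bigr => -[t lt_tn] _ /=.
rewrite (big_nat_widen _ _ n.+1) // big_geq_mkord big_distrr big_mkcond /=.
by apply: eq_bigr => k _; rewrite /gamma_term ltnS andbC.
Qed.

Lemma gamma_term_shift k j : 0 < k -> k <= n -> j <= minn (n - k) (n - d) ->
  gamma_term (k + j) k = 2 ^ n * ('C(n, k) * ('C(n - k, j) * 2 ^ j)).
Proof.
move=> k_gt0 le_kn j_le; rewrite /gamma_term ifT; last by apply/andP; split; lia.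
have le_kjn : k + j <= n by lia.
have pow2 : 2 ^ (k + j) * 2 ^ (n - k) = 2 ^ n * 2 ^ j.
  by rewrite -!expnD addnAC subnKC // (leq_trans (leq_addr j k)).
transitivity ('C(n, k + j) * 'C(k + j, k) * (2 ^ (k + j) * 2 ^ (n - k))); first by ring.
by rewrite bin_mul_shift // pow2; ring.
Qed.

Lemma size_bound_le_column k :
  2 ^ n * ('C(n, k) * size_bound k) <= \sum_(t < n.+1) gamma_term t k.
Proof.
rewrite /size_bound; case: (posnP k) => [->|k_gt0]; first by rewrite !muln0.
case: (leqP k n) => [le_kn|lt_nk]; last by rewrite bin_small // mul0n muln0.
set m := minn (n - k) (n - d).
have -> : 3 ^ m = \sum_(j < m.+1) 'C(m, j) * 2 ^ j.
  by rewrite -[3]/(1 + 2) expnDn; apply: eq_bigr => j _; rewrite exp1n mul1n.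
have le_kmn : k + m <= n by lia.
rewrite !big_distrr /=; apply: leq_trans (leq_sum_subinterval (gamma_term^~ k) le_kmn).
apply: leq_sum => j _; rewrite gamma_term_shift //; last by rewrite -ltnS.
rewrite leq_mul2l leq_mul2l leq_mul2r leq_bin2l ?orbT //; lia.
Qed.

Lemma sum_size_bound : (\sum_(X : {set 'I_n}) size_bound #|X|) * 2 ^ n <= gamma n d.
Proof.
rewrite sum_by_card mulnC big_distrr /= gamma_exchange.
by apply: leq_sum => k _; apply: size_bound_le_column.
Qed.

End Counting.

Section MinimumDistance.
Variables (n : nat) (G : rel 'I_n) (delta : nat).
Hypothesis sG : sym_irrefl G.
Hypothesis delta_min : forall H, LC_orbit G H -> forall v, delta <= deg H v.

Lemma support_gt_delta k H X :
  LC_orbit G H -> X != set0 -> #|X| <= k -> delta < #|support H X|.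
Proof.
elim: k H X => [|k IH] H X oH X0 card_X.
  by move: card_X; rewrite leqn0 cards_eq0 (negbTE X0).
(* an odd vertex w of X is removed from X by local complementation at w *)
have odd_case H' w : LC_orbit G H' -> w \in X -> parity H' w X ->
    delta < #|support H' X|.
  move=> oH' wX odd_w; have sH' := orbit_sym_irrefl sG oH'.
  rewrite -(support_lc w X sH') /lc_shift odd_w wX; apply: IH (orbit_lc w oH') _ _.
    have [y yX H'wy] := parity_neighbour odd_w; apply/set0Pn; exists y.
    by rewrite !inE yX andbT; apply: contraTneq H'wy => ->; rewrite (proj1 sH').
  by move: card_X; rewrite (cardsD1 w X) wX.
have sH := orbit_sym_irrefl sG oH; have [v vX] := set0Pn _ X0.
case: (pickP (fun w => (w \in X) && parity H w X)) => [w /andP [wX odd_w] | X_even].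
  exact: odd_case _ _ oH wX odd_w.
have even_v : parity H v X = false by have := X_even v; rewrite vX.
(* local complementation at an even neighbour y of v fixes X and makes v odd *)
case: (pickP (fun y => H v y && ~~ parity H y X)) => [y /andP [Hvy even_y] | nb_odd].
  rewrite -(support_lc y X sH) /lc_shift (negbTE even_y).
  apply: (odd_case _ v (orbit_lc y oH) vX).
  by rewrite parity_lc (proj2 sH y v) Hvy (negbTE even_y) vX even_v.
apply: leq_trans (deg_lt_support sH vX _); first by rewrite ltnS delta_min.
by move=> y Hvy; have := nb_odd y; rewrite Hvy => /negbFE.
Qed.

Lemma delta_lt_order : 0 < n -> delta < n.
Proof.
move=> n_gt0; pose v := Ordinal n_gt0.
have X0 : [set v] != set0 by apply/set0Pn; exists v; rewrite inE.
apply: leq_trans (support_gt_delta (orbit_refl G) X0 (leqnn _)) _.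
by rewrite -[n in _ <= n]card_ord max_card.
Qed.

Lemma cosupport_le_size_bound X : X != set0 ->
  3 ^ #|~: support G X| <= size_bound n delta.+1 #|X|.
Proof.
move=> X0; rewrite /size_bound cards_eq0 (negbTE X0) leq_exp2l // leq_min.
rewrite cardsCs setCK card_ord.
have X_sub : X \subset support G X by apply/subsetP => v vX; rewrite inE vX.
have gt_delta := support_gt_delta (orbit_refl G) X0 (leqnn #|X|).
by apply/andP; split; apply: leq_sub2l; rewrite ?subset_leq_card.
Qed.

End MinimumDistance.

Lemma state_sum_bound n (G : rel 'I_n) delta : 0 < n -> sym_irrefl G ->
  (forall H, LC_orbit G H -> forall v, delta <= deg H v) ->
  state_sum G setT (@F4 n) * 2 ^ n <= gamma n delta.+1 + 6 ^ n.
Proof.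
move=> n_gt0 sG delta_min; rewrite state_sum_full (bigD1 set0) //= mulnDl.
have -> : support G set0 = set0 by apply/setP => v; rewrite !inE /parity big_set0.
rewrite setC0 cardsT card_ord -expnMn addnC leq_add2r.
apply: leq_trans (sum_size_bound (delta_lt_order sG delta_min n_gt0)).
rewrite leq_mul2r [X in _ <= X](bigD1 set0) //= cards0 size_bound0 add0n.
by apply/orP; right; apply: leq_sum => X; apply: cosupport_le_size_bound.
Qed.

Local Open Scope ring_scope.

Theorem theorem1 (n : nat) (G : rel 'I_n) (HG : simple_graph G) (delta : nat)
  (Hdelta_attained : exists2 H, LC_orbit G H & exists v, deg H v = delta)
  (Hdelta_min : forall H, LC_orbit G H -> forall v, (delta <= deg H v)%N) :
  ((interlace G).[4])%:~R
    <= ((gamma n delta.+1)%:R + (6 ^ n)%:R) / (2 ^ n)%:R :> rat.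
Proof.
have sG := simple_sym_irrefl HG.
have n_gt0 : (0 < n)%N.
  by case: Hdelta_attained => _ _ [v _]; apply: leq_ltn_trans (ltn_ord v).
rewrite /interlace Qaux_at4 // ?cardsT ?card_ord //.
rewrite rmorph_nat ler_pdivlMr ?ltr0n ?expn_gt0 // -natrD -natrM ler_nat.
exact: state_sum_bound n_gt0 sG Hdelta_min.
Qed.
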